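(* For every integer $n\ge 0$, $$\binom{2n}{n}\,{}_3F_2\!\left(\begin{matrix}-n,\,-n,\,\tfrac12\\ -n+\tfrac12,\,2\end{matrix};1\right)=\begin{cases}\binom{n}{n/2}^2,& n \text{ even},\\[2pt] \binom{n}{(n-1)/2}^2,& n\text{ odd}.\end{cases}$$
   Context: ${}_3F_2\!\left(\begin{matrix}a_1,a_2,a_3\\ b_1,b_2\end{matrix};z\right)=\sum_{j\ge0}\frac{(a_1)_j(a_2)_j(a_3)_j}{(b_1)_j(b_2)_j}\frac{z^j}{j!}$, where $(x)_j=x(x+1)\cdots(x+j-1)$ is the Pochhammer symbol; when $a_1=-n$ is a nonpositive integer the series terminates at $j=n$. *)

From mathcomp Require Import all_boot all_order all_algebra.
Set Implicit Arguments. Unset Strict Implicit. Unset Printing Implicit Defensive.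
Import Order.TTheory GRing.Theory Num.Theory.
Local Open Scope ring_scope.

Definition pochhammer (R : ringType) (x : R) (j : nat) : R :=
  \prod_(i < j) (x + i%:R).

(* Terminating 3F2 with a1 = -n: the series is summed over j = 0..n
   (all terms with j > n vanish since (-n)_j = 0). *)
Definition hyp3F2_term (n : nat) (a2 a3 b1 b2 z : rat) (j : nat) : rat :=
  pochhammer (- n%:R) j * pochhammer a2 j * pochhammer a3 j
  / (pochhammer b1 j * pochhammer b2 j) * z ^+ j / (j`!)%:R.

Definition hyp3F2_terminating (n : nat) (a2 a3 b1 b2 z : rat) : rat :=
  \sum_(j < n.+1) hyp3F2_term n a2 a3 b1 b2 z j.

From mathcomp Require Import all_boot all_order all_algebra.
From mathcomp Require Import ring lra zify.
Set Implicit Arguments. Unset Strict Implicit. Unset Printing Implicit Defensive.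
Import Order.TTheory GRing.Theory Num.Theory.
Local Open Scope ring_scope.

(* Creative telescoping.  Let t(n, j) be the j-th summand of the left-hand side
   and S(n) = \sum_j t(n, j).  The quotients t(n, j+1) / t(n, j) and
   t(n, j) / t(n+1, j) are rational functions of n and j, so with the rational
   certificate R(n, j) found by Zeilberger's algorithm one checks
     a0(n) t(n, j) + a1(n) t(n+1, j) + a2(n) t(n+2, j) = G(n, j+1) - G(n, j),
     G(n, j) = R(n, j) t(n+2, j),
   and summing over j gives a0(n) S(n) + a1(n) S(n+1) + a2(n) S(n+2) = 0.
   The right-hand side is C(n, n/2)^2 in both parities and satisfies the same
   recurrence (by C(2k+1, k) = (2k+1)/(k+1) C(2k, k) and C(2k+2, k+1) =
   2 C(2k+1, k)); as a2(n) never vanishes, agreement at n = 0, 1 suffices. *)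

Lemma pochhammerS (R : nzRingType) (x : R) j :
  pochhammer x j.+1 = pochhammer x j * (x + j%:R).
Proof. by rewrite /pochhammer big_ord_recr. Qed.

Lemma pochhammerSl (R : nzRingType) (x : R) j :
  pochhammer x j.+1 = x * pochhammer (x + 1) j.
Proof.
rewrite /pochhammer big_ord_recl addr0; congr (_ * _).
by apply: eq_bigr => i _; rewrite /= /bump add1n -natr1 (addrC _%:R) addrA.
Qed.

Lemma pochhammer_addr1 (F : fieldType) (x : F) j : x != 0 ->
  pochhammer (x + 1) j = pochhammer x j * (x + j%:R) / x.
Proof. by move=> x_neq0; apply: (mulfI x_neq0); rewrite -pochhammerSl pochhammerS; field. Qed.

Lemma pochhammer_neq0 (R : idomainType) (x : R) j :
  (forall i, (i < j)%N -> x + i%:R != 0) -> pochhammer x j != 0.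
Proof. by move=> hx; apply/prodf_neq0 => i _; apply: hx. Qed.

Lemma pochhammer_oppn_eq0 (R : comNzRingType) (m j : nat) :
  (m < j)%N -> pochhammer (- m%:R : R) j = 0.
Proof. by move=> lt_mj; rewrite /pochhammer (bigD1 (Ordinal lt_mj)) //= addNr mul0r. Qed.

Lemma hyp3F2_term0 n a2 a3 b1 b2 z : hyp3F2_term n a2 a3 b1 b2 z 0 = 1.
Proof. by rewrite /hyp3F2_term /pochhammer !big_ord0 expr0 !(mul1r, mulr1, invr1). Qed.

Lemma natr_fact_neq0 j : (j`!)%:R != 0 :> rat.
Proof. by rewrite pnatr_eq0 -lt0n fact_gt0. Qed.

Lemma hyp3F2_termS n a2 a3 b1 b2 z j :
  pochhammer b1 j.+1 != 0 -> pochhammer b2 j.+1 != 0 ->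
  hyp3F2_term n a2 a3 b1 b2 z j.+1 = hyp3F2_term n a2 a3 b1 b2 z j *
    ((- n%:R + j%:R) * (a2 + j%:R) * (a3 + j%:R) * z
      / ((b1 + j%:R) * (b2 + j%:R) * j.+1%:R)).
Proof.
rewrite !pochhammerS !mulf_eq0 !negb_or => /andP[pb1 b1j] /andP[pb2 b2j].
rewrite /hyp3F2_term !pochhammerS factS natrM exprS; field.
by rewrite nat1r pnatr_eq0 natr_fact_neq0 b2j b1j pb1 pb2.
Qed.
Lemma recurrence2_eq (R : idomainType) (a0 a1 a2 u v : nat -> R) :
  (forall n, a2 n != 0) ->
  (forall n, a0 n * u n + a1 n * u n.+1 + a2 n * u n.+2 = 0) ->
  (forall n, a0 n * v n + a1 n * v n.+1 + a2 n * v n.+2 = 0) ->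
  u 0%N = v 0%N -> u 1%N = v 1%N -> u =1 v.
Proof.
move=> a2_neq0 rec_u rec_v u0 u1.
suff uv n : u n = v n /\ u n.+1 = v n.+1 by move=> n; case: (uv n).
elim: n => [//|n [un unS]]; split=> //.
apply: (mulfI (a2_neq0 n)); apply: (addrI (a0 n * u n + a1 n * u n.+1)).
by rewrite rec_u un unS rec_v.
Qed.

Lemma odd_sub_even_neq0 (a b : nat) : 2 * a%:R + 1 - 2 * b%:R != 0 :> rat.
Proof.
have -> : 2 * a%:R + 1 - 2 * b%:R = (a.*2.+1)%:R - (b.*2)%:R :> rat.
  by rewrite -natr1 -!muln2 !natrM; ring.
by rewrite subr_eq0 eqr_nat; apply/negP => /eqP/(congr1 odd); rewrite /= !odd_double.
Qed.

Lemma half_shift_neq0 (m i : nat) : - m%:R + 1/2 + i%:R != 0 :> rat.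
Proof.
have -> : - m%:R + 1/2 + i%:R = (2 * i%:R + 1 - 2 * m%:R) / 2 :> rat by field.
by rewrite mulf_neq0 ?odd_sub_even_neq0.
Qed.

Lemma pochhammer_half_neq0 (m j : nat) : pochhammer (- m%:R + 1/2 : rat) j != 0.
Proof. by apply: pochhammer_neq0 => i _; apply: half_shift_neq0. Qed.

Lemma pochhammer_two_neq0 j : pochhammer (2 : rat) j != 0.
Proof. by apply: pochhammer_neq0 => i _; rewrite -natrD pnatr_eq0. Qed.

Lemma bin_double_succ k : (k.+1 * 'C(k.*2.+1, k) = k.*2.+1 * 'C(k.*2, k))%N.
Proof. by rewrite (mul_bin_down k.*2.+1 k); congr (_ * _)%N; rewrite -addnn; lia. Qed.

Lemma bin_double_succS k : 'C(k.*2.+2, k.+1) = (2 * 'C(k.*2.+1, k))%N.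
Proof.
have le_k : (k.+1 <= k.*2.+1)%N by rewrite -addnn; lia.
rewrite binS -(bin_sub le_k).
have -> : (k.*2.+1 - k.+1 = k)%N by rewrite -addnn; lia.
by rewrite addnn mul2n.
Qed.

Lemma bin_double_succ_ratio k :
  'C(k.*2.+1, k)%:R = 'C(k.*2, k)%:R * (2 * k%:R + 1) / (k%:R + 1) :> rat.
Proof.
have k1_neq0 : k%:R + 1 != 0 :> rat by rewrite natr1 pnatr_eq0.
apply: (mulfI k1_neq0); rewrite natr1 -(natrM _ k.+1) bin_double_succ natrM.
by rewrite -natr1 -muln2 natrM; field; rewrite addrC.
Qed.

Lemma central_bin_succ_ratio k :
  'C(k.+1.*2, k.+1)%:R = 'C(k.*2, k)%:R * (2 * (2 * k%:R + 1)) / (k%:R + 1) :> rat.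
Proof. by rewrite doubleS bin_double_succS natrM bin_double_succ_ratio; ring. Qed.

Definition ratio_j (x y : rat) : rat :=
  (y - x) ^+ 2 * (y + 1/2) / ((- x + 1/2 + y) * (2 + y) * (y + 1)).

Definition ratio_n (x y : rat) : rat :=
  (x + 1 - y) ^+ 2 / (2 * (x + 1) * (2 * x + 1 - 2 * y)).

Definition coef0 (x : rat) : rat := -16 * (x + 1) ^+ 2 * (2 * x + 5).
Definition coef1 (x : rat) : rat := -4 * (2 * x ^+ 2 + 8 * x + 7).
Definition coef2 (x : rat) : rat := (x + 3) ^+ 2 * (2 * x + 3).

Definition certificate (x y : rat) : rat :=
  y * (-64 - 3*y + 51*y^+2 - 10*y^+3 + x*(-166 - 52*y + 100*y^+2 - 14*y^+3)
   + x^+2*(-151 - 85*y + 62*y^+2 - 4*y^+3) + x^+3*(-58 - 46*y + 12*y^+2) + x^+4*(-8 - 8*y))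
  / ((x + 2)^+2 * (2*x + 3 - 2*y)).

Lemma certificate_identity (x y : rat) :
  x + 1 != 0 -> x + 2 != 0 -> y + 1 != 0 -> y + 2 != 0 ->
  2 * x + 1 - 2 * y != 0 -> 2 * x + 3 - 2 * y != 0 ->
  coef0 x * ratio_n x y * ratio_n (x + 1) y + coef1 x * ratio_n (x + 1) y + coef2 x
  = certificate x (y + 1) * ratio_j (x + 2) y - certificate x y.
Proof.
move=> hx1 hx2 hy1 hy2 h1 h3.
rewrite /coef0 /coef1 /coef2 /certificate /ratio_n /ratio_j.
field.
have -> : - (x + 2) * 2 + 1 + y * 2 = - (2 * x + 3 - 2 * y) by ring.
have -> : 2 * x + 3 - 2 * (y + 1) = 2 * x + 1 - 2 * y by ring.
by rewrite oppr_eq0 [2 + y]addrC hx1 hx2 hy1 hy2 h1 h3.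
Qed.

Lemma coef2_neq0 n : coef2 n%:R != 0.
Proof.
have n_ge0 := ler0n rat n.
by apply: lt0r_neq0; rewrite /coef2 mulr_gt0 ?exprn_gt0 //; lra.
Qed.

Definition summand (n j : nat) : rat :=
  'C(n.*2, n)%:R * hyp3F2_term n (- n%:R) (1/2) (- n%:R + 1/2) 2 1 j.

Lemma summandS n j : summand n j.+1 = summand n j * ratio_j n%:R j%:R.
Proof.
rewrite /summand hyp3F2_termS ?pochhammer_half_neq0 ?pochhammer_two_neq0 // -mulrA /ratio_j -natr1.
field.
have -> : 1 *- n * 2 + 1 + j%:R * 2 = 2 * j%:R + 1 - 2 * n%:R :> rat by ring.
by rewrite natr1 -natrD !pnatr_eq0 odd_sub_even_neq0.
Qed.

Lemma hyp3F2_term_predn n j :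
  hyp3F2_term n (- n%:R) (1/2) (- n%:R + 1/2) 2 1 j
  = hyp3F2_term n.+1 (- n.+1%:R) (1/2) (- n.+1%:R + 1/2) 2 1 j
    * ((n%:R + 1 - j%:R) / (n%:R + 1)) ^+ 2 * ((2 * n%:R + 1) / (2 * n%:R + 1 - 2 * j%:R)).
Proof.
have nS_neq0 : - n.+1%:R != 0 :> rat by rewrite oppr_eq0 pnatr_eq0.
have half_neq0 : - n.+1%:R + 1/2 != 0 :> rat by have := half_shift_neq0 n.+1 0; rewrite addr0.
rewrite /hyp3F2_term.
have -> : - n%:R = - n.+1%:R + 1 :> rat by rewrite -natr1; ring.
have -> : - n.+1%:R + 1 + 1/2 = - n.+1%:R + 1/2 + 1 :> rat by ring.
rewrite (pochhammer_addr1 j nS_neq0) (pochhammer_addr1 j half_neq0).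
field.
have -> : - (1 + n%:R) * 2 + 1 + j%:R * 2 = 2 * j%:R + 1 - 2 * n.+1%:R :> rat.
  by rewrite -natr1; ring.
have -> : - (1 + n%:R) * 2 + 1 = - (2 * n%:R + 1 - 2 * 0%:R) :> rat by ring.
rewrite oppr_eq0 !odd_sub_even_neq0 pochhammer_half_neq0 pochhammer_two_neq0.
by rewrite natr1 pnatr_eq0 natr_fact_neq0.
Qed.

Lemma summand_predn n j : summand n j = summand n.+1 j * ratio_n n%:R j%:R.
Proof.
rewrite /summand hyp3F2_term_predn central_bin_succ_ratio /ratio_n.
by field; rewrite odd_sub_even_neq0 natr1 pnatr_eq0.
Qed.

Lemma summand_telescoping n j :
  coef0 n%:R * summand n j + coef1 n%:R * summand n.+1 j + coef2 n%:R * summand n.+2 j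
  = certificate n%:R j.+1%:R * summand n.+2 j.+1 - certificate n%:R j%:R * summand n.+2 j.
Proof.
set x : rat := n%:R; set y : rat := j%:R.
have nS : n.+1%:R = x + 1 by rewrite natr1.
have nSS : n.+2%:R = x + 2 by rewrite -addn2 natrD.
have jS : j.+1%:R = y + 1 by rewrite natr1.
rewrite (summand_predn n) (summand_predn n.+1) summandS nS nSS jS -/x -/y.
transitivity (summand n.+2 j * (coef0 x * ratio_n x y * ratio_n (x + 1) y
                                 + coef1 x * ratio_n (x + 1) y + coef2 x)); first ring.
rewrite certificate_identity; first ring.
- by rewrite -nS pnatr_eq0.
- by rewrite -nSS pnatr_eq0.
- by rewrite -jS pnatr_eq0.
- by rewrite -natrD pnatr_eq0 addn2.
- exact: odd_sub_even_neq0.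
- have -> : 2 * x + 3 - 2 * y = 2 * n.+1%:R + 1 - 2 * y by rewrite nS; ring.
  exact: odd_sub_even_neq0.
Qed.

Definition hyp_sum (n : nat) : rat := \sum_(j < n.+1) summand n j.

Lemma summand_eq0 n j : (n < j)%N -> summand n j = 0.
Proof. by move=> lt_nj; rewrite /summand /hyp3F2_term pochhammer_oppn_eq0 // !mul0r mulr0. Qed.

Lemma hyp_sum_widen n m : (n <= m)%N -> hyp_sum n = \sum_(j < m.+1) summand n j.
Proof.
move=> le_nm; rewrite /hyp_sum (big_ord_widen m.+1 (summand n)) // big_mkcond /=.
by apply: eq_bigr => j _; case: ltnP => // /summand_eq0 ->.
Qed.

Lemma hyp_sum_recurrence n :
  coef0 n%:R * hyp_sum n + coef1 n%:R * hyp_sum n.+1 + coef2 n%:R * hyp_sum n.+2 = 0.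
Proof.
rewrite (hyp_sum_widen (leqW (leqnSn n))) (hyp_sum_widen (leqnSn n.+1)).
rewrite (hyp_sum_widen (leqnn n.+2)) !mulr_sumr -!big_split /=.
pose step j := coef0 n%:R * summand n j + coef1 n%:R * summand n.+1 j
                + coef2 n%:R * summand n.+2 j.
pose G j := certificate n%:R j%:R * summand n.+2 j.
rewrite -(big_mkord xpredT step) (@telescope_sumr_eq _ _ _ G) => [|//|k _].
- by rewrite /G summand_eq0 // /certificate !mul0r mulr0 subrr.
- exact: summand_telescoping.
Qed.

Definition midbin_sq (n : nat) : rat := ('C(n, n./2) ^ 2)%:R.

Lemma midbin_sq_double k : midbin_sq k.*2 = 'C(k.*2, k)%:R ^+ 2.
Proof. by rewrite /midbin_sq natrX doubleK. Qed.

Lemma midbin_sq_double_succ k :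
  midbin_sq k.*2.+1 = ('C(k.*2, k)%:R * (2 * k%:R + 1) / (k%:R + 1)) ^+ 2.
Proof. by rewrite /midbin_sq natrX /= uphalf_double bin_double_succ_ratio. Qed.

Lemma midbin_sq_double_succS k : midbin_sq k.*2.+2 = 4 * midbin_sq k.*2.+1.
Proof.
rewrite /midbin_sq !natrX /= uphalf_double doubleK bin_double_succS natrM.
by rewrite exprMn; congr (_ * _); rewrite -natrX.
Qed.

Lemma midbin_sq_recurrence n :
  coef0 n%:R * midbin_sq n + coef1 n%:R * midbin_sq n.+1 + coef2 n%:R * midbin_sq n.+2 = 0.
Proof.
have k1_neq0 k : k%:R + 1 != 0 :> rat by rewrite natr1 pnatr_eq0.
rewrite -[n]odd_double_half; case: (odd n); rewrite ?add0n ?add1n; set k := n./2.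
- rewrite -doubleS midbin_sq_double_succS !midbin_sq_double_succ central_bin_succ_ratio.
  rewrite -natr1 -mul2n natrM /coef0 /coef1 /coef2.
  by field; rewrite nat1r !k1_neq0.
- rewrite midbin_sq_double_succS midbin_sq_double_succ midbin_sq_double.
  rewrite -mul2n natrM /coef0 /coef1 /coef2.
  by field; rewrite k1_neq0.
Qed.

Lemma midbin_sq_parity n :
  (if ~~ odd n then ('C(n, n./2) ^ 2)%:R else ('C(n, (n - 1)./2) ^ 2)%:R) = midbin_sq n.
Proof. by case: n => [//|n]; rewrite /midbin_sq /= subn1 /= uphalf_half; case: (odd n). Qed.


Theorem mainTheorem5 (n : nat) :
  ('C(2 * n, n))%:R *
    hyp3F2_terminating n (- n%:R) (1 / 2) (- n%:R + 1 / 2) 2 1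
  = (if ~~ odd n then ('C(n, n./2) ^ 2)%:R else ('C(n, (n - 1)./2) ^ 2)%:R :> rat).
Proof.
rewrite midbin_sq_parity mul2n mulr_sumr -/(hyp_sum n).
apply: (@recurrence2_eq _ (fun n => coef0 n%:R) (fun n => coef1 n%:R) (fun n => coef2 n%:R)).
- exact: coef2_neq0.
- exact: hyp_sum_recurrence.
- exact: midbin_sq_recurrence.
- by rewrite /hyp_sum big_ord1 /summand hyp3F2_term0.
- rewrite /hyp_sum big_ord_recr big_ord1 /= summandS /summand hyp3F2_term0 /ratio_j.
  by rewrite /midbin_sq (_ : 'C(1.*2, 1) = 2) //=; field.
Qed.
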